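(* For $n\ge 1$, the graph $\mathcal{SP}_L(IS_n)$ is isomorphic to the intersection graph of the non-empty subsets of an $n$-element set, i.e. the simple graph whose vertices are the non-empty subsets of $\{1,\dots,n\}$, two distinct subsets being adjacent iff they intersect.
   Context: $IS_n$ is the set of all partial injective maps of an $n$-element set $X$, with composition written left to right ($\alpha\beta$ means first $\alpha$, then $\beta$); its zero is the empty map. For $a\in IS_n$, $S^1a=\{sa:s\in IS_n\}\cup\{a\}$. $\mathcal{P}_L(IS_n)$ is the simple graph on the non-empty partial injections with distinct $a,b$ adjacent iff $S^1a\cap S^1b$ contains a non-empty map. $L_a$ is the Green $\mathcal{L}$-class of $a$ ($a\,\mathcal{L}\,b$ iff $S^1a=S^1b$). $\mathcal{SP}_L(IS_n)$ is the simple graph with vertex set $\{L_a: a \text{ non-empty}\}$, distinct $L_a,L_b$ adjacent iff $a,b$ are adjacent in $\mathcal{P}_L(IS_n)$. *)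

From mathcomp Require Import all_boot.
Set Implicit Arguments. Unset Strict Implicit. Unset Printing Implicit Defensive.

(* The n-element set X is 'I_n.  A partial map X -> X is a finite function
   'I_n -> option 'I_n (None = undefined). *)
Definition pmap (n : nat) := {ffun 'I_n -> option 'I_n}.

Definition is_pinj n (f : pmap n) : bool :=
  [forall x, forall y, ((f x != None) && (f x == f y)) ==> (x == y)].

Definition IS (n : nat) := {f : pmap n | is_pinj f}.

Definition emptym n : pmap n := [ffun _ => None].

(* composition written left to right: (a b) x = b (a x) *)
Definition pcomp n (a b : pmap n) : pmap n := [ffun x => obind b (a x)].

Definition S1 n (a : IS n) : {set pmap n} :=
  [set f | [exists s : IS n, f == pcomp (val s) (val a)]] :|: [set val a].

Definition PLadj n (a b : IS n) : bool :=
  (a != b) && [exists f in S1 a :&: S1 b, f != emptym n].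

Definition Lclass n (a : IS n) : {set IS n} := [set b | S1 b == S1 a].

Arguments emptym : clear implicits.
Definition SPvert (n : nat) : pred {set IS n} :=
  fun L => [exists a : IS n, (val a != emptym n) && (L == Lclass a)].
Definition SPV (n : nat) := {L : {set IS n} | @SPvert n L}.

Definition SPadj n (L1 L2 : SPV n) : bool :=
  (L1 != L2) &&
  [exists a : IS n, exists b : IS n,
     [&& Lclass a == val L1, Lclass b == val L2 & PLadj a b]].

Definition IGV (n : nat) := {A : {set 'I_n} | A != set0}.
Definition IGadj n (A B : IGV n) : bool :=
  (A != B) && (val A :&: val B != set0).

Definition graph_iso (V W : finType) (eV : rel V) (eW : rel W) : Prop :=
  exists f : V -> W, bijective f /\ forall x y, eV x y = eW (f x) (f y).

(* An element of S^1 a is exactly a partial injection whose image lies in the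
   image of a: given such an f, the map f b with b the inverse of a on im a
   satisfies (f b) a = f.  Hence S^1 a is determined by im a, the L-class of a
   is the set of partial injections with the same image, and two maps are
   adjacent in P_L(IS_n) iff their images meet (a common non-empty element of
   S^1 a and S^1 b has its image in both, and conversely the partial identity
   on a common point lies in both).  Sending L_a to im a is therefore the
   required isomorphism, with inverse A |-> L_(id_A). *)

From Pilot Require Import Defs.
From mathcomp Require Import all_boot.
Set Implicit Arguments. Unset Strict Implicit. Unset Printing Implicit Defensive.

Section PartialInjections.
Variable n : nat.
Implicit Types (f g : Defs.pmap n) (a b : IS n) (A : {set 'I_n}).

Lemma pinjP f :
  reflect (forall x y z, f x = Some z -> f y = Some z -> x = y) (is_pinj f).
Proof.
apply: (iffP forallP) => [H x y z fx fy | H x].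
  by have := forallP (H x) y; rewrite fx fy eqxx /= => /eqP.
apply/forallP=> y; apply/implyP=> /andP[]; case fx: (f x) => [z|] //= _ /eqP fy.
by apply/eqP; exact: H fx (esym fy).
Qed.

Definition pimg f : {set 'I_n} := [set y | [exists x, f x == Some y]].

Lemma pimgP f y : reflect (exists x, f x = Some y) (y \in pimg f).
Proof. by rewrite inE; apply: (iffP existsP) => [[x /eqP]|[x /eqP]]; eauto. Qed.

Lemma pimg_eq0 f : (pimg f == set0) = (f == emptym n).
Proof.
apply/eqP/eqP => [img0|->].
  apply/ffunP=> x; rewrite ffunE; case fx: (f x) => [y|] //.
  have : y \in pimg f by apply/pimgP; eauto.
  by rewrite img0 inE.
by apply/setP=> y; rewrite in_set0; apply/negbTE/pimgP => -[x]; rewrite ffunE.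
Qed.

Lemma pcomp_pinj f g : is_pinj f -> is_pinj g -> is_pinj (Defs.pcomp f g).
Proof.
move=> /pinjP injf /pinjP injg; apply/pinjP => x y z; rewrite !ffunE.
case fx: (f x) => [u|] //=; case fy: (f y) => [v|] //= gu gv.
by have uv := injg _ _ _ gu gv; subst; exact: injf fx fy.
Qed.

Lemma pimg_pcomp f g : pimg (Defs.pcomp f g) \subset pimg g.
Proof.
apply/subsetP => y /pimgP [x]; rewrite ffunE; case: (f x) => [u|] //= gu.
by apply/pimgP; eauto.
Qed.

Definition pinv g : Defs.pmap n := [ffun y => [pick x | g x == Some y]].

Lemma pinv_Some g y x : pinv g y = Some x -> g x = Some y.
Proof. by rewrite ffunE; case: pickP => // x' /eqP gx' [<-]. Qed.

Lemma pinv_pinj g : is_pinj (pinv g).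
Proof. by apply/pinjP => y1 y2 z /pinv_Some g1 /pinv_Some; rewrite g1 => -[]. Qed.

Lemma pinv_pimg g y : y \in pimg g -> exists x, pinv g y = Some x.
Proof.
rewrite ffunE; case: pickP => [x _| none]; first by eauto.
by case/pimgP => x gx; move: (none x); rewrite gx eqxx.
Qed.

Lemma pcomp_pinvK f g :
  pimg f \subset pimg g -> Defs.pcomp (Defs.pcomp f (pinv g)) g = f.
Proof.
move=> sub; apply/ffunP => x; rewrite !ffunE.
case fx: (f x) => [y|] //=.
have : y \in pimg g by apply: (subsetP sub); apply/pimgP; eauto.
by case/pinv_pimg => z gz; rewrite gz /=; exact: pinv_Some gz.
Qed.

Lemma mem_S1 a f : (f \in S1 a) = is_pinj f && (pimg f \subset pimg (val a)).
Proof.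
rewrite /S1 !inE; apply/idP/idP.
  case/orP => [/existsP [s /eqP ->] | /eqP ->].
    by rewrite pcomp_pinj ?(valP s) ?(valP a) // pimg_pcomp.
  by rewrite (valP a) subxx.
case/andP => injf sub; apply/orP; left; apply/existsP.
exists (exist _ (Defs.pcomp f (pinv (val a))) (pcomp_pinj injf (pinv_pinj _))).
by rewrite /= pcomp_pinvK.
Qed.

Lemma mem_S1_self a : val a \in S1 a.
Proof. by rewrite mem_S1 (valP a) subxx. Qed.

Lemma eq_S1 a b : (S1 a == S1 b) = (pimg (val a) == pimg (val b)).
Proof.
apply/eqP/eqP => [eqS | eqimg]; last by apply/setP => f; rewrite !mem_S1 eqimg.
have := mem_S1_self a; rewrite eqS mem_S1 => /andP[_ sab].
have := mem_S1_self b; rewrite -eqS mem_S1 => /andP[_ sba].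
by apply/eqP; rewrite eqEsubset sab sba.
Qed.

Lemma mem_Lclass a b : (b \in Lclass a) = (pimg (val b) == pimg (val a)).
Proof. by rewrite inE eq_S1. Qed.

Lemma eq_Lclass a b : (Lclass a == Lclass b) = (pimg (val a) == pimg (val b)).
Proof.
apply/eqP/eqP => [eqL | eqimg]; last by apply/setP => c; rewrite !mem_Lclass eqimg.
by apply/eqP; rewrite -mem_Lclass -eqL mem_Lclass.
Qed.

Definition pid A : Defs.pmap n := [ffun x => if x \in A then Some x else None].

Lemma pid_pinj A : is_pinj (pid A).
Proof.
by apply/pinjP => x y z; rewrite !ffunE; case: ifP => _ // [->]; case: ifP => _ // [->].
Qed.

Lemma pimg_pid A : pimg (pid A) = A.
Proof.
apply/setP => y; apply/pimgP/idP => [[x]|Ay]; last by exists y; rewrite ffunE Ay.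
by rewrite ffunE; case: ifP => // Ax [<-].
Qed.

Definition pidIS A : IS n := exist _ (pid A) (pid_pinj A).

Lemma PLadj_pimg a b :
  PLadj a b = (a != b) && (pimg (val a) :&: pimg (val b) != set0).
Proof.
rewrite /PLadj; congr (_ && _).
apply/existsP/set0Pn => [[f /andP [Sf nf]] | [y aby]].
  rewrite inE !mem_S1 in Sf; case/andP: Sf => /andP[_ sa] /andP[_ sb].
  rewrite -pimg_eq0 in nf; case/set0Pn: nf => y fy; exists y.
  by rewrite inE (subsetP sa _ fy) (subsetP sb _ fy).
exists (pid [set y]); rewrite -pimg_eq0 inE !mem_S1 pid_pinj pimg_pid !sub1set.
by rewrite -in_setI aby; apply/set0Pn; exists y; rewrite inE.
Qed.

End PartialInjections.

Section LClassGraph.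
Variable n : nat.
Implicit Types (a b : IS n) (L : SPV n) (A : IGV n).

Definition Limg (L : {set IS n}) := \bigcup_(a in L) pimg (val a).

Lemma Limg_Lclass a : Limg (Lclass a) = pimg (val a).
Proof.
apply/setP=> y; apply/bigcupP/idP => [[b]|ay]; last by exists a; rewrite ?mem_Lclass.
by rewrite mem_Lclass => /eqP <-.
Qed.

Lemma SPV_rep L : exists2 a, val a != emptym n & val L = Lclass a.
Proof. by case/existsP: (valP L) => a /andP[? /eqP]; exists a. Qed.

Lemma Limg_neq0 L : Limg (val L) != set0.
Proof. by have [a a0 ->] := SPV_rep L; rewrite Limg_Lclass pimg_eq0. Qed.

Definition sp2ig L : IGV n := exist _ (Limg (val L)) (Limg_neq0 L).

Lemma Lclass_pid_vert A : SPvert (Lclass (pidIS (val A))).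
Proof.
apply/existsP; exists (pidIS (val A)).
by rewrite eqxx andbT /= -pimg_eq0 pimg_pid (valP A).
Qed.

Definition ig2sp A : SPV n :=
  exist _ (Lclass (pidIS (val A))) (Lclass_pid_vert A).

Lemma sp2igK : cancel sp2ig ig2sp.
Proof.
move=> L; apply: val_inj => /=; have [a _ ->] := SPV_rep L.
by apply/eqP; rewrite Limg_Lclass eq_Lclass /= pimg_pid.
Qed.

Lemma ig2spK : cancel ig2sp sp2ig.
Proof. by move=> A; apply: val_inj; rewrite /= Limg_Lclass pimg_pid. Qed.

Lemma SPadj_Limg L1 L2 :
  SPadj L1 L2 = (L1 != L2) && (Limg (val L1) :&: Limg (val L2) != set0).
Proof.
rewrite /SPadj; case: (L1 =P L2) => //= L12.
have [a1 _ e1] := SPV_rep L1; have [a2 _ e2] := SPV_rep L2.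
have neq_a a b : Lclass a = Lclass a1 -> Lclass b = Lclass a2 -> a != b.
  move=> ea eb; apply: contra_not_neq L12 => ab.
  by apply: val_inj; rewrite e1 e2 -ea -eb ab.
rewrite e1 e2 !Limg_Lclass; apply/existsP/idP => [[a /existsP [b]] | meet].
  case/and3P => ea eb; rewrite PLadj_pimg (neq_a _ _ (eqP ea) (eqP eb)) /=.
  by move: ea eb; rewrite !eq_Lclass => /eqP -> /eqP ->.
exists a1; apply/existsP; exists a2.
by rewrite !eqxx PLadj_pimg neq_a.
Qed.

End LClassGraph.

Theorem mainTheorem16 (n : nat) : 1 <= n ->
  graph_iso (V := SPV n) (W := IGV n) (@SPadj n) (@IGadj n).
Proof.
move=> _; exists (@sp2ig n); split; first exact: Bijective (@sp2igK n) (@ig2spK n).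
move=> L1 L2; rewrite SPadj_Limg /IGadj.
by rewrite (inj_eq (can_inj (@sp2igK n))).
Qed.
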